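(* Let $n=m=1$ (scalars $A\neq0$, $B\neq0$, $Q,R>0$) in the setting of the context, and assume $q<q_c$. Then the stability threshold satisfies $$\bar\delta(q)\ge\frac{Q(R+B^2P)}{A^2B^2P^2}+\frac{(1-q)R}{R+B^2P},$$ where $P>0$ solves $P=Q+A^2P-(1-q)(R+B^2P)^{-1}A^2B^2P^2$.
   Context: Let $A\in\mathbb{R}^{n\times n}$, $B\in\mathbb{R}^{n\times m}$ with $(A,B)$ stabilizable, and let $Q$, $R$ be symmetric positive definite. Let $q\in(0,1)$ be the loss probability of $x_{t+1}=Ax_t+\lambda_tBu_t$ with i.i.d. $\lambda_t$, $\mathcal P(\lambda_t=0)=q$. For $p\in[0,1)$ the modified Riccati equation with parameter $p$ is $X=Q+A^\top XA-(1-p)A^\top XB(R+B^\top XB)^{-1}B^\top XA$; $q_c$ is the critical loss probability such that for every $p\in[0,q_c)$ this equation has a unique positive definite solution. For $\hat q\in[0,q_c)$ let $\hat P$ be the positive definite solution for parameter $\hat q$ and $\hat K=-(R+B^\top\hat PB)^{-1}B^\top\hat PA$. Define $\mathcal C(q,\hat q)=Q+(1-q)\hat K^\top R\hat K-(q-\hat q)A^\top\hat PB(R+B^\top\hat PB)^{-1}B^\top\hat PA$ and the stability threshold $\bar\delta(q)=\sup\{\delta\ge0:\ \mathcal C(q,\hat q)\succ0 \text{ for all } \hat q\in[0,q_c)\text{ with } q-\hat q<\delta\}$ (possibly $+\infty$). *)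

From HB Require Import structures.
From mathcomp Require Import all_boot all_order all_algebra.
From mathcomp Require Import all_classical all_reals all_analysis.
Set Implicit Arguments. Unset Strict Implicit. Unset Printing Implicit Defensive.
Import Order.TTheory GRing.Theory Num.Theory.
Local Open Scope classical_set_scope.
Local Open Scope ring_scope.

(* Scalar modified Riccati equation with parameter p:
   X = Q + A X A - (1-p) A X B (Rw + B X B)^-1 B X A. *)
Definition mre (R : realType) (A B Q Rw p X : R) : Prop :=
  X = Q + A ^+ 2 * X - (1 - p) * (A ^+ 2 * B ^+ 2 * X ^+ 2) / (Rw + B ^+ 2 * X).

Definition mre_unique_pos (R : realType) (A B Q Rw p : R) : Prop :=
  exists! X : R, 0 < X /\ mre A B Q Rw p X.

Definition qcrit (R : realType) (A B Q Rw : R) : R :=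
  sup [set c : R | 0 <= c <= 1 /\
        forall p : R, 0 <= p < c -> mre_unique_pos A B Q Rw p].

Definition Khat (R : realType) (A B Rw Ph : R) : R :=
  - (B * Ph * A) / (Rw + B ^+ 2 * Ph).

Definition Ccal (R : realType) (A B Q Rw q qh Ph : R) : R :=
  Q + (1 - q) * (Khat A B Rw Ph ^+ 2 * Rw)
    - (q - qh) * (A ^+ 2 * B ^+ 2 * Ph ^+ 2) / (Rw + B ^+ 2 * Ph).

Definition delta_bar (R : realType) (A B Q Rw q : R) : \bar R :=
  ereal_sup [set d%:E | d in [set d : R | 0 <= d /\
      forall qh Ph : R, 0 <= qh -> qh < qcrit A B Q Rw ->
        0 < Ph -> mre A B Q Rw qh Ph ->
        q - qh < d -> 0 < Ccal A B Q Rw q qh Ph]].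

From mathcomp Require Import all_boot all_order all_algebra.
From mathcomp Require Import all_classical all_reals all_analysis.
From mathcomp.algebra_tactics Require Import ring lra.
Import Order.TTheory GRing.Theory Num.Theory.
Set Implicit Arguments. Unset Strict Implicit. Unset Printing Implicit Defensive.
Local Open Scope classical_set_scope.
Local Open Scope ring_scope.

(* Clearing the denominator turns the scalar MRE with parameter p into the
   quadratic equation h_p(X) = B^2 (1 - p A^2) X^2 + (Rw (1 - A^2) - Q B^2) X - Q Rw = 0.
   When p A^2 > 1 the two roots of h_p have positive product, so a unique
   positive solution must be a double root; the discriminant vanishes for at
   most one such p, hence q < q_c forces q A^2 <= 1.  Then h_q is convex with
   h_q(0) < 0, and h_q(P') <= 0 for the positive solution P' of the MRE with any
   parameter q' <= q, so P' <= P.  Finally C(q, q') is a positive multiple of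
   delta_bound q P' - (q - q'), and delta_bound q is decreasing, so
   delta_bound q P' >= delta_bound q P, the claimed bound. *)

Section ScalarRiccati.
Variable R : realType.
Variables A B Q Rw : R.
Hypotheses (A_neq0 : A != 0) (B_neq0 : B != 0) (Q_gt0 : 0 < Q) (Rw_gt0 : 0 < Rw).

Definition mre_lead (p : R) := B ^+ 2 * (1 - p * A ^+ 2).
Definition mre_lin := Rw * (1 - A ^+ 2) - Q * B ^+ 2.
Definition mre_poly (p X : R) := mre_lead p * X ^+ 2 + mre_lin * X - Q * Rw.

Lemma mre_denom_gt0 X : 0 <= X -> 0 < Rw + B ^+ 2 * X.
Proof. by move=> X_ge0; rewrite ltr_wpDr // mulr_ge0 ?sqr_ge0. Qed.

Lemma mreE p X : 0 <= X -> mre A B Q Rw p X <-> mre_poly p X = 0.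
Proof.
move=> X_ge0; have D_neq0 := lt0r_neq0 (mre_denom_gt0 X_ge0).
have -> : mre_poly p X = (X - (Q + A ^+ 2 * X - (1 - p) * (A ^+ 2 * B ^+ 2 * X ^+ 2)
                                 / (Rw + B ^+ 2 * X))) * (Rw + B ^+ 2 * X).
  by rewrite /mre_poly /mre_lead /mre_lin; field.
rewrite /mre; split => [E | /eqP]; first by rewrite -E subrr mul0r.
by rewrite mulf_eq0 (negbTE D_neq0) orbF subr_eq0 => /eqP.
Qed.

Lemma mre_poly_other_root p X : mre_lead p != 0 -> X != 0 -> mre_poly p X = 0 ->
  mre_poly p (Q * Rw / (- mre_lead p * X)) = 0.
Proof.
move=> a_neq0 X_neq0 rootX.
have lin : mre_lin = (Q * Rw - mre_lead p * X ^+ 2) / X.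
  apply: (mulIf X_neq0); rewrite divfK //.
  by apply/eqP; rewrite -subr_eq0 -rootX /mre_poly; apply/eqP; ring.
by rewrite /mre_poly lin; field; rewrite X_neq0 a_neq0.
Qed.

Lemma mre_unique_pos_disc p : 1 < p * A ^+ 2 -> mre_unique_pos A B Q Rw p ->
  mre_lin ^+ 2 = 4 * Q * Rw * B ^+ 2 * (p * A ^+ 2 - 1).
Proof.
move=> pA2_gt1 [X [[X_gt0 mreX] uniqX]].
have a_lt0 : mre_lead p < 0.
  by rewrite /mre_lead pmulr_rlt0 ?subr_lt0 // exprn_even_gt0.
have X_neq0 := lt0r_neq0 X_gt0.
have rootX : mre_poly p X = 0 by apply/mreE => //; exact: ltW.
pose Y := Q * Rw / (- mre_lead p * X).
have aX_gt0 : 0 < - mre_lead p * X by rewrite mulr_gt0 ?oppr_gt0.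
have Y_gt0 : 0 < Y by rewrite /Y divr_gt0 // mulr_gt0.
have YX : Y = X.
  symmetry; apply: uniqX; split => //; apply/mreE; first exact: ltW.
  exact: mre_poly_other_root (ltr0_neq0 a_lt0) X_neq0 rootX.
have aX2 : mre_lead p * X ^+ 2 = - (Q * Rw).
  have : Y * (- mre_lead p * X) = Q * Rw by rewrite divfK ?lt0r_neq0.
  by rewrite YX => <-; ring.
have bX : mre_lin * X = 2 * (Q * Rw).
  by apply/eqP; rewrite -subr_eq0 -rootX /mre_poly aX2; apply/eqP; ring.
apply: (mulIf (expf_neq0 2 X_neq0)).
transitivity ((mre_lin * X) ^+ 2); first ring.
rewrite bX; transitivity (4 * (Q * Rw) * - (mre_lead p * X ^+ 2)).
  by rewrite aX2; ring.
by rewrite /mre_lead; ring.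
Qed.

Lemma lt_qcrit_unique_pos q : 0 < q -> q < qcrit A B Q Rw ->
  exists2 c, q < c & forall p, 0 <= p < c -> mre_unique_pos A B Q Rw p.
Proof.
move=> q_gt0 q_lt_qc.
have S_neq0 : [set c : R | 0 <= c <= 1 /\
    forall p : R, 0 <= p < c -> mre_unique_pos A B Q Rw p] !=set0.
  apply/set0P/eqP => S0; move: q_lt_qc; rewrite /qcrit S0 sup0.
  by rewrite ltNge ltW.
by have [c [_ uniq_c] q_lt_c] := sup_gt S_neq0 q_lt_qc; exists c.
Qed.

Lemma lt_qcrit_mulA2_le1 q : 0 < q -> q < qcrit A B Q Rw -> q * A ^+ 2 <= 1.
Proof.
move=> q_gt0 /(lt_qcrit_unique_pos q_gt0) [c q_lt_c uniq_lt_c].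
rewrite leNgt; apply/negP => qA2_gt1.
have A2_gt0 : 0 < A ^+ 2 by rewrite exprn_even_gt0.
have disc p : q < p < c -> mre_lin ^+ 2 = 4 * Q * Rw * B ^+ 2 * (p * A ^+ 2 - 1).
  move=> /andP[q_lt_p p_lt_c]; apply: mre_unique_pos_disc.
    by apply: (lt_le_trans qA2_gt1); rewrite ler_pM2r // ltW.
  by apply: uniq_lt_c; rewrite p_lt_c andbT ltW // (lt_trans q_gt0).
pose p1 := (2 * q + c) / 3; pose p2 := (q + 2 * c) / 3.
have : 4 * Q * Rw * B ^+ 2 * A ^+ 2 * (p2 - p1) = 0.
  transitivity (4 * Q * Rw * B ^+ 2 * (p2 * A ^+ 2 - 1)
                - 4 * Q * Rw * B ^+ 2 * (p1 * A ^+ 2 - 1)); first ring.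
  by rewrite -!disc ?subrr //; apply/andP; rewrite /p1 /p2; split; lra.
have p1_lt_p2 : p1 < p2 by rewrite /p1 /p2; lra.
by apply/eqP; rewrite !mulf_neq0 // ?expf_neq0 // ?lt0r_neq0 // ?subr_gt0.
Qed.

Lemma mre_poly_le0_le_root q P X : 0 <= mre_lead q -> 0 < P ->
  mre_poly q P = 0 -> mre_poly q X <= 0 -> X <= P.
Proof.
move=> a_ge0 P_gt0 rootP hX_le0; rewrite leNgt; apply/negP => P_lt_X.
have aPb_gt0 : 0 < mre_lead q * P + mre_lin.
  have : (mre_lead q * P + mre_lin) * P = Q * Rw.
    by apply/eqP; rewrite -subr_eq0 -rootP /mre_poly; apply/eqP; ring.
  by move/(congr1 (fun x => 0 < x)); rewrite pmulr_lgt0 // mulr_gt0.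
have aX_ge0 : 0 <= mre_lead q * X by rewrite mulr_ge0 // ltW // (lt_trans P_gt0).
have : 0 < (X - P) * (mre_lead q * (X + P) + mre_lin).
  by rewrite mulr_gt0 ?subr_gt0 // mulrDr; lra.
have -> : (X - P) * (mre_lead q * (X + P) + mre_lin) = mre_poly q X - mre_poly q P.
  by rewrite /mre_poly; ring.
by rewrite rootP subr0 ltNge hX_le0.
Qed.

Lemma le_mre_sol q qh P Ph : qh <= q -> q * A ^+ 2 <= 1 -> 0 < P -> 0 < Ph ->
  mre A B Q Rw q P -> mre A B Q Rw qh Ph -> Ph <= P.
Proof.
move=> qh_le_q qA2_le1 P_gt0 Ph_gt0.
move=> /(mreE _ (ltW P_gt0)) rootP /(mreE _ (ltW Ph_gt0)) rootPh.
apply: (mre_poly_le0_le_root (q := q) _ P_gt0 rootP).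
  by rewrite /mre_lead mulr_ge0 // ?sqr_ge0 ?subr_ge0.
have -> : mre_poly q Ph = mre_poly qh Ph - (q - qh) * (A ^+ 2 * B ^+ 2 * Ph ^+ 2).
  by rewrite /mre_poly /mre_lead; ring.
have ABPh_ge0 : 0 <= A ^+ 2 * B ^+ 2 * Ph ^+ 2 by rewrite -!exprMn sqr_ge0.
by rewrite rootPh sub0r oppr_le0 mulr_ge0 // subr_ge0.
Qed.

Lemma sqr_ABX_gt0 X : X != 0 -> 0 < A ^+ 2 * B ^+ 2 * X ^+ 2.
Proof. by move=> X_neq0; rewrite -!exprMn exprn_even_gt0 // !mulf_neq0. Qed.

Definition delta_bound (q X : R) :=
  Q * (Rw + B ^+ 2 * X) / (A ^+ 2 * B ^+ 2 * X ^+ 2) + (1 - q) * Rw / (Rw + B ^+ 2 * X).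

Lemma delta_bound_gt0 q X : q < 1 -> 0 < X -> 0 < delta_bound q X.
Proof.
move=> q_lt1 X_gt0; have D_gt0 := mre_denom_gt0 (ltW X_gt0).
have ABX_gt0 := sqr_ABX_gt0 (lt0r_neq0 X_gt0).
by rewrite addr_gt0 // divr_gt0 // mulr_gt0 // subr_gt0.
Qed.

Lemma delta_bound_antimono q X Y : q <= 1 -> 0 < X -> X <= Y ->
  delta_bound q Y <= delta_bound q X.
Proof.
move=> q_le1 X_gt0 X_le_Y; have Y_gt0 := lt_le_trans X_gt0 X_le_Y.
have first_termE Z : 0 < Z -> Q * (Rw + B ^+ 2 * Z) / (A ^+ 2 * B ^+ 2 * Z ^+ 2)
    = Q / (A ^+ 2 * B ^+ 2) * (Rw * Z^-1 ^+ 2 + B ^+ 2 * Z^-1).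
  by move=> Z_gt0; field; rewrite A_neq0 B_neq0 lt0r_neq0.
have iY_le_iX : Y^-1 <= X^-1 by rewrite lef_pV2 ?posrE.
have iY_ge0 : 0 <= Y^-1 by rewrite invr_ge0 ltW.
rewrite /delta_bound !first_termE //; apply: lerD.
  apply: ler_wpM2l; first by rewrite divr_ge0 -?exprMn ?sqr_ge0 ?ltW.
  apply: lerD; last by apply: ler_wpM2l; rewrite ?sqr_ge0.
  by apply: ler_wpM2l; [exact: ltW Rw_gt0 | rewrite !expr2; apply: ler_pM].
apply: ler_wpM2l; first by rewrite mulr_ge0 ?subr_ge0 // ltW.
rewrite lef_pV2 ?posrE ?mre_denom_gt0 ?(ltW X_gt0) ?(ltW Y_gt0) // lerD2l.
by apply: ler_wpM2l; rewrite ?sqr_ge0.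
Qed.

Lemma Ccal_gt0 q qh Ph : 0 < Ph -> q - qh < delta_bound q Ph ->
  0 < Ccal A B Q Rw q qh Ph.
Proof.
move=> Ph_gt0 qqh_lt; have D_gt0 := mre_denom_gt0 (ltW Ph_gt0).
have -> : Ccal A B Q Rw q qh Ph = A ^+ 2 * B ^+ 2 * Ph ^+ 2 / (Rw + B ^+ 2 * Ph)
                                  * (delta_bound q Ph - (q - qh)).
  by rewrite /Ccal /Khat /delta_bound; field; rewrite A_neq0 B_neq0 !lt0r_neq0.
by rewrite mulr_gt0 ?subr_gt0 // divr_gt0 // sqr_ABX_gt0 // lt0r_neq0.
Qed.

End ScalarRiccati.

Theorem theorem4 (R : realType) (A B Q Rw q P : R) :
  A != 0 -> B != 0 -> 0 < Q -> 0 < Rw ->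
  0 < q -> q < 1 -> q < qcrit A B Q Rw ->
  0 < P -> mre A B Q Rw q P ->
  (((Q * (Rw + B ^+ 2 * P)) / (A ^+ 2 * B ^+ 2 * P ^+ 2)
     + (1 - q) * Rw / (Rw + B ^+ 2 * P))%:E <= delta_bar A B Q Rw q)%E.
Proof.
move=> A_neq0 B_neq0 Q_gt0 Rw_gt0 q_gt0 q_lt1 q_lt_qc P_gt0 mreP.
have qA2_le1 := lt_qcrit_mulA2_le1 A_neq0 B_neq0 Q_gt0 Rw_gt0 q_gt0 q_lt_qc.
apply: ereal_sup_ubound; exists (delta_bound A B Q Rw q P) => //.
split; first exact/ltW/delta_bound_gt0.
move=> qh Ph _ _ Ph_gt0 mrePh qqh_lt; apply: Ccal_gt0 => //.
have [q_le_qh | qh_lt_q] := leP q qh.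
  by apply: (le_lt_trans _ (delta_bound_gt0 _ _ _ _ q_lt1 Ph_gt0)) => //; rewrite subr_le0.
apply: (lt_le_trans qqh_lt); apply: delta_bound_antimono => //; first exact: ltW.
exact: (le_mre_sol Q_gt0 Rw_gt0 (ltW qh_lt_q) qA2_le1 P_gt0 Ph_gt0 mreP mrePh).
Qed.
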